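(* Assume the context distribution is stationary, i.e. $p(x,t)=p(x)p(t)$ on $\mathcal{X}\times[0,T]$ and $p(x\mid t')=p(x)$. Suppose $\pi_0(a\mid x,t)>0$ for all $x\in\mathcal{X}$, $t\in[0,T]$, $a\in\mathcal{A}$; that $p(\phi(t'))>0$; and that $\Delta_q(x,t,t',a)=\Delta_{\hat f}(x,t,t',a)$ for all $x\in\mathcal{X}$, $a\in\mathcal{A}$ and $t\in[0,T]$ with $\mathbb{I}_\phi(t,t')=1$. Then the OPFV gradient estimator is unbiased: $\mathbb{E}_{\mathcal{D}}[\nabla_\zeta\hat V^{\mathrm{OPFV}}_{t'}(\pi_\zeta;\mathcal{D})]=\nabla_\zeta V_{t'}(\pi_\zeta)$.
   Context: Contexts $x\in\mathcal{X}$, finite action set $\mathcal{A}$, continuous time $t$, rewards $r\in[0,r_{\max}]$. Logged data $\mathcal{D}=\{(x_i,t_i,a_i,r_i)\}_{i=1}^n$: $n$ i.i.d. draws $(x,t)\sim p(x,t)$ supported on $\mathcal{X}\times[0,T]$, $a\sim\pi_0(a\mid x,t)$, $r\sim p(r\mid x,t,a)$; reward distributions defined for all $t\ge0$; $q(x,t,a)=\mathbb{E}[r\mid x,t,a]$. Target time $t'>T$. $\pi_\zeta(a\mid x,t)$ is a policy differentiable in a parameter vector $\zeta$, with score $s_\zeta(x,t,a)=\nabla_\zeta\log\pi_\zeta(a\mid x,t)$; $\nabla_\zeta V_{t'}(\pi_\zeta)=\mathbb{E}_{p(x\mid t')\pi_\zeta(a\mid x,t')}[q(x,t',a)s_\zeta(x,t',a)]$.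 A time feature function $\phi$ maps times to labels; $\mathbb{I}_\phi(t,t')=\mathbb{I}\{\phi(t)=\phi(t')\}$, $p(\phi(t'))=\int_0^Tp(s)\mathbb{I}_\phi(s,t')ds$. $\hat f$ is a fixed regressor. The OPFV gradient estimator is $$\nabla_\zeta\hat V^{\mathrm{OPFV}}_{t'}(\pi_\zeta;\mathcal{D})=\frac1n\sum_{i=1}^n\left\{\frac{\mathbb{I}_\phi(t_i,t')}{p(\phi(t'))}\frac{\pi_\zeta(a_i\mid x_i,t')}{\pi_0(a_i\mid x_i,t_i)}\big(r_i-\hat f(x_i,t_i,a_i)\big)s_\zeta(x_i,t',a_i)+\mathbb{E}_{\pi_\zeta(a\mid x_i,t')}\big[\hat f(x_i,t',a)s_\zeta(x_i,t',a)\big]\right\}.$$ $\Delta_q(x,t,t',a)=q(x,t,a)-q(x,t',a)$, $\Delta_{\hat f}(x,t,t',a)=\hat f(x,t,a)-\hat f(x,t',a)$. *)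

From HB Require Import structures.
From mathcomp Require Import all_boot all_order all_algebra.
From mathcomp Require Import all_classical all_reals all_analysis.
Set Implicit Arguments. Unset Strict Implicit. Unset Printing Implicit Defensive.
Import Order.TTheory GRing.Theory Num.Theory.
Import numFieldNormedType.Exports.
Local Open Scope classical_set_scope.
Local Open Scope ring_scope.

Section OPFV.
Context {R : realType} {d : measure_display} {X : measurableType d} {A : finType}.

(* a logged record (x, t, a, r) *)
Definition record := (X * R * A * R)%type.

(* expected reward q(x,t,a) = E[r | x,t,a], reward distribution kappa x t a *)
Definition qfun (kappa : X -> R -> A -> probability R R) (x : X) (t : R) (a : A) : R :=
  \int[kappa x t a]_(r in setT) r.

(* score s_zeta(x,t,a) = grad_zeta log pi_zeta(a|x,t), as a row vector:
   j-th component = directional derivative along the j-th basis vector *)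
Definition score {k : nat} (pi : 'rV[R]_k -> X -> R -> A -> R)
  (zeta : 'rV[R]_k) (x : X) (t : R) (a : A) : 'rV[R]_k :=
  \row_j derive (fun z : 'rV[R]_k => ln (pi z x t a)) zeta (delta_mx 0 j).

Definition Iphi {L : eqType} (phi : R -> L) (t t' : R) : R := (phi t == phi t')%:R.

Definition p_phi {L : eqType} (pt : R -> R) (T : R) (phi : R -> L) (t' : R) : R :=
  \int[lebesgue_measure]_(s in `[0, T]) (pt s * Iphi phi s t').

(* expectation of a real function of one record drawn from
   x ~ px, t ~ pt (density on [0,T]), a ~ pi0(.|x,t), r ~ kappa x t a *)
Definition E_rec (px : probability X R) (pt : R -> R) (T : R)
  (pi0 : X -> R -> A -> R) (kappa : X -> R -> A -> probability R R)
  (g : record -> R) : R :=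
  \int[px]_(x in setT)
    \int[lebesgue_measure]_(t in `[0, T])
      (pt t * \sum_(a : A) pi0 x t a *
        \int[kappa x t a]_(r in setT) g (x, t, a, r)).

(* expectation over a dataset of n i.i.d. records (iterated integral of the
   n-fold product law), for a vector-valued function of the dataset *)
Fixpoint E_data_R (px : probability X R) (pt : R -> R) (T : R)
  (pi0 : X -> R -> A -> R) (kappa : X -> R -> A -> probability R R)
  (n : nat) (F : seq record -> R) : R :=
  match n with
  | 0 => F [::]
  | n'.+1 => E_rec px pt T pi0 kappa
              (fun z => E_data_R px pt T pi0 kappa n' (fun D => F (z :: D)))
  end.

Definition E_data {k : nat} (px : probability X R) (pt : R -> R) (T : R)
  (pi0 : X -> R -> A -> R) (kappa : X -> R -> A -> probability R R)
  (n : nat) (F : seq record -> 'rV[R]_k) : 'rV[R]_k :=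
  \row_j E_data_R px pt T pi0 kappa n (fun D => F D 0 j).

Definition opfv_grad {k : nat} {L : eqType} (pt : R -> R) (T : R) (phi : R -> L)
  (pi0 : X -> R -> A -> R) (fhat : X -> R -> A -> R)
  (pi : 'rV[R]_k -> X -> R -> A -> R) (zeta : 'rV[R]_k) (t' : R)
  (D : seq record) : 'rV[R]_k :=
  (size D)%:R^-1 *:
  \sum_(z <- D)
    let: (x, t, a, r) := z in
    ((Iphi phi t t' / p_phi pt T phi t') * (pi zeta x t' a / pi0 x t a)
       * (r - fhat x t a)) *: score pi zeta x t' a
    + \sum_(b : A) (pi zeta x t' b * fhat x t' b) *: score pi zeta x t' b.

Definition true_grad {k : nat} (pxt' : probability X R)
  (kappa : X -> R -> A -> probability R R)
  (pi : 'rV[R]_k -> X -> R -> A -> R) (zeta : 'rV[R]_k) (t' : R) : 'rV[R]_k :=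
  \row_j \int[pxt']_(x in setT)
     (\sum_(a : A) pi zeta x t' a * qfun kappa x t' a * score pi zeta x t' a 0 j).

End OPFV.

From HB Require Import structures.
From mathcomp Require Import all_boot all_order all_algebra.
From mathcomp Require Import all_classical all_reals all_analysis.
From mathcomp Require Import measurable_realfun ring lra.
Set Implicit Arguments. Unset Strict Implicit. Unset Printing Implicit Defensive.
Import Order.TTheory GRing.Theory Num.Theory.
Import numFieldNormedType.Exports.
Local Open Scope classical_set_scope.
Local Open Scope ring_scope.

(* Unbiasedness is an exact identity, checked one record at a time.  Given
   (x, t, a), the estimator's summand is affine in the reward, so integrating
   the reward replaces r by q(x,t,a); averaging a over pi0 then cancels the
   importance weight, leaving the regression term plus
   I_phi(t,t') / p(phi(t')) times sum_a pi (q - fhat)(x,t,a) s.  Where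
   I_phi(t,t') = 1 the hypothesis Delta_q = Delta_fhat moves this residual from
   t to t', so integrating t against p(t) turns I_phi(t,t') into p(phi(t')),
   which cancels; regression and residual terms add up to sum_a pi q s at t',
   whose x-integral is the true gradient.  The mean over n i.i.d. records has
   the same expectation. *)

Section real_integrals.
Context {R : realType}.

Lemma integrableZl_EFin {d} {T : measurableType d} (mu : {measure set T -> \bar R})
    (D : set T) (f : T -> R) (c : R) : measurable D ->
  mu.-integrable D (EFin \o f) -> mu.-integrable D (EFin \o (fun x => c * f x)).
Proof.
move=> mD /(integrableZl mD c).
by apply: eq_integrable => // x _ /=; rewrite EFinM.
Qed.

Lemma probability_Rintegral_cst {d} {T : measurableType d} (P : probability T R)
    (c : R) :
  \int[P]_(x in setT) c = c.
Proof.
have P1 : fine (P setT) = 1 by rewrite probability_setT.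
by rewrite Rintegral_cst // P1 mulr1.
Qed.

Lemma probability_itv_integrable_id (P : probability R R) (rmax : R) :
  P `[0, rmax]%classic = 1%E -> P.-integrable setT (EFin \o id).
Proof.
move=> P1; have mI : measurable (`[0, rmax]%classic : set R) by [].
have PC0 : P (~` `[0, rmax]%classic) = 0%E by rewrite probability_setC // P1 subee.
rewrite (negligible_integrable (measurableC mI) measurableT _ PC0); last first.
  exact/measurable_EFinP.
rewrite setTD setCK; apply: measurable_bounded_integrable => //.
  by rewrite (le_lt_trans (probability_le1 P mI)) ?ltry.
exists rmax; split; first by rewrite num_real.
move=> M rM r /=; rewrite in_itv /= => /andP[r0 rr].
by rewrite ger0_norm // ltW // (le_lt_trans rr).
Qed.

Lemma Rintegral_affine_itv (P : probability R R) (rmax : R) (g : R -> R) (u v : R) :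
  P `[0, rmax]%classic = 1%E -> (forall r, g r = u + v * r) ->
  \int[P]_(r in setT) g r = u + v * \int[P]_(r in setT) r.
Proof.
move=> P1 gE; have iid := probability_itv_integrable_id P1.
under eq_Rintegral do rewrite gE.
rewrite RintegralD //; last exact: integrableZl_EFin.
  by rewrite probability_Rintegral_cst RintegralZl.
exact: finite_measure_integrable_cst.
Qed.

End real_integrals.

Section dataset_expectation.
Context {R : realType} {d : measure_display} {X : measurableType d} {A : finType}.
Variables (px : probability X R) (pt : R -> R) (T : R) (pi0 : X -> R -> A -> R)
  (kappa : X -> R -> A -> probability R R).
Local Notation rec := (@record R d X A).
Local Notation E_rec := (E_rec px pt T pi0 kappa).
Local Notation E_data_R := (E_data_R px pt T pi0 kappa).

Lemma eq_E_data_R_size m (F G : seq rec -> R) :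
  (forall D, size D = m -> F D = G D) -> E_data_R m F = E_data_R m G.
Proof.
elim: m F G => [|m IHm] F G FG /=; first exact: FG.
congr E_rec; apply: funext => z; apply: IHm => D Dm.
by apply: FG; rewrite /= Dm.
Qed.

Variables (h : rec -> R) (V : R).
(* Only affine images of h are known to be integrated linearly by E_rec, so
   this is the invariant the induction on the dataset size carries. *)
Hypothesis E_rec_affine : forall c al, E_rec (fun z => c + al * h z) = c + al * V.

Lemma E_data_R_affine_sum m c al :
  E_data_R m (fun D => c + al * \sum_(z <- D) h z) = c + al * (m%:R * V).
Proof.
elim: m c al => [|m IHm] c al /=; first by rewrite big_nil !mulr0 mul0r mulr0.
transitivity (E_rec (fun z => (c + al * (m%:R * V)) + al * h z)).
  congr E_rec; apply: funext => z.
  transitivity (E_data_R m (fun D => (c + al * h z) + al * \sum_(z' <- D) h z')).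
    by congr E_data_R; apply: funext => D; rewrite big_cons mulrDr addrA.
  by rewrite IHm addrAC.
by rewrite E_rec_affine -addrA -mulrDr mulrSr mulrDl mul1r.
Qed.

Lemma E_data_R_mean n (F : seq rec -> R) : (0 < n)%N ->
  (forall D, F D = (size D)%:R^-1 * \sum_(z <- D) h z) -> E_data_R n F = V.
Proof.
move=> n_gt0 FE.
rewrite (eq_E_data_R_size (G := fun D => 0 + n%:R^-1 * \sum_(z <- D) h z)).
  by rewrite E_data_R_affine_sum add0r mulrA mulVf ?mul1r // pnatr_eq0 -lt0n.
by move=> D Dn; rewrite FE Dn add0r.
Qed.

End dataset_expectation.

Section opfv_unbiased.
Context {R : realType} {d : measure_display} {X : measurableType d} {A : finType}
  {L : eqType} {k : nat}.
Variables (px : probability X R) (T t' rmax : R) (pt : R -> R)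
  (pi0 : X -> R -> A -> R) (kappa : X -> R -> A -> probability R R)
  (phi : R -> L) (fhat : X -> R -> A -> R) (pi : 'rV[R]_k -> X -> R -> A -> R)
  (zeta : 'rV[R]_k) (j : 'I_k).

Let p := p_phi pt T phi t'.
Let q := qfun kappa.
Let s x a := score pi zeta x t' a 0 j.
Let regression_grad x := \sum_(a : A) pi zeta x t' a * fhat x t' a * s x a.
Let residual_grad x := \sum_(a : A) pi zeta x t' a * ((q x t' a - fhat x t' a) * s x a).
Let policy_grad x := \sum_(a : A) pi zeta x t' a * q x t' a * s x a.

Definition opfv_term (z : @record R d X A) : R :=
  let: (x, t, a, r) := z in
  (Iphi phi t t' / p * (pi zeta x t' a / pi0 x t a) * (r - fhat x t a)) * s x a
  + regression_grad x.

Lemma opfv_grad_coordE D :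
  opfv_grad pt T phi pi0 fhat pi zeta t' D 0 j
  = (size D)%:R^-1 * \sum_(z <- D) opfv_term z.
Proof.
rewrite /opfv_grad mxE summxE; congr (_ * _).
apply: eq_bigr => -[[[x t] a] r] _; rewrite mxE summxE; congr (_ + _).
  by rewrite mxE.
by apply: eq_bigr => b _; rewrite mxE.
Qed.

Hypothesis pt_meas : measurable_fun `[0, T] pt.
Hypothesis pt_ge0 : forall t, 0 <= t <= T -> 0 <= pt t.
Hypothesis pt_int1 :
  (\int[@lebesgue_measure R]_(t in `[0%R, T]%classic) (pt t)%:E)%E = 1%E.
Hypothesis pi0_gt0 : forall x t a, 0 <= t <= T -> 0 < pi0 x t a.
Hypothesis pi0_sum1 : forall x t, 0 <= t <= T -> \sum_(a : A) pi0 x t a = 1.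
Hypothesis kappa_supp : forall x t a, kappa x t a `[0, rmax]%classic = 1%E.
Hypothesis phi_meas : measurable (phi @^-1` [set phi t']).
Hypothesis p_gt0 : 0 < p.
Hypothesis policy_grad_int : px.-integrable setT (EFin \o policy_grad).
Hypothesis residual_eq : forall x a t, 0 <= t <= T -> Iphi phi t t' = 1 ->
  q x t a - q x t' a = fhat x t a - fhat x t' a.

Let p_neq0 : p != 0. Proof. exact: lt0r_neq0. Qed.

Lemma pt_integrable : (@lebesgue_measure R).-integrable `[0, T] (EFin \o pt).
Proof.
apply/integrableP; split; first exact/measurable_EFinP.
suff -> : (\int[lebesgue_measure]_(t in `[0%R, T]%classic) `|(EFin \o pt) t|
    = \int[lebesgue_measure]_(t in `[0%R, T]%classic) (pt t)%:E)%E.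
  by rewrite pt_int1 ltry.
by apply: eq_integral => t; rewrite inE /= in_itv /= => tT; rewrite ger0_norm // pt_ge0.
Qed.

Lemma Rintegral_pt : \int[@lebesgue_measure R]_(t in `[0, T]) pt t = 1.
Proof. by rewrite /Rintegral pt_int1. Qed.

Lemma measurable_Iphi : measurable_fun `[0, T] (fun t => Iphi phi t t').
Proof.
rewrite (_ : (fun t => _) = \1_(phi @^-1` [set phi t'])).
  exact: measurable_indic.
apply/funext => t; rewrite /Iphi indicE; congr ((nat_of_bool _)%:R).
by apply/eqP/idP; rewrite inE.
Qed.

Lemma pt_Iphi_integrable : (@lebesgue_measure R).-integrable `[0, T]
  (EFin \o (fun t => pt t * Iphi phi t t')).
Proof.
apply: (le_integrable _ _ _ pt_integrable) => //.
  apply/measurable_EFinP.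
  exact: measurable_funM measurable_Iphi.
move=> t _; rewrite /= normrM lee_fin /Iphi.
by case: eqP => _; rewrite ?normr1 ?normr0 ?mulr1 ?mulr0.
Qed.

Lemma Iphi_residual x a t : 0 <= t <= T ->
  Iphi phi t t' * (q x t a - fhat x t a) = Iphi phi t t' * (q x t' a - fhat x t' a).
Proof.
move=> tT; case phi_t: (phi t == phi t'); last by rewrite /Iphi phi_t !mul0r.
have I1 : Iphi phi t t' = 1 by rewrite /Iphi phi_t.
by rewrite I1 !mul1r; have := residual_eq x a tT I1; lra.
Qed.

Lemma opfv_term_reward_mean c al x t a :
  \int[kappa x t a]_(r in setT) (c + al * opfv_term (x, t, a, r))
  = c + al * regression_grad x
    + al * (Iphi phi t t' / p) * (pi zeta x t' a / pi0 x t a)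
      * (q x t a - fhat x t a) * s x a.
Proof.
set w := Iphi phi t t' / p * (pi zeta x t' a / pi0 x t a).
have affine_in_r r : c + al * opfv_term (x, t, a, r)
    = c + al * (regression_grad x - w * fhat x t a * s x a) + al * w * s x a * r.
  by rewrite /opfv_term -/w; ring.
by rewrite (Rintegral_affine_itv (kappa_supp x t a) affine_in_r) /q /qfun /w; ring.
Qed.

Lemma opfv_term_action_mean c al x t : 0 <= t <= T ->
  \sum_(a : A) pi0 x t a * \int[kappa x t a]_(r in setT) (c + al * opfv_term (x, t, a, r))
  = c + al * regression_grad x + al / p * residual_grad x * Iphi phi t t'.
Proof.
move=> tT; under eq_bigr => a _ do rewrite opfv_term_reward_mean mulrDr.
rewrite big_split /= -mulr_suml pi0_sum1 // mul1r; congr (_ + _).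
rewrite /residual_grad mulr_sumr mulr_suml; apply: eq_bigr => a _.
have pi0_neq0 : pi0 x t a != 0 by rewrite gt_eqF // pi0_gt0.
transitivity (al / p * pi zeta x t' a * s x a
              * (Iphi phi t t' * (q x t a - fhat x t a))).
  by field; rewrite p_neq0 pi0_neq0.
by rewrite Iphi_residual //; ring.
Qed.

Lemma regression_residual_grad x : regression_grad x + residual_grad x = policy_grad x.
Proof.
rewrite /regression_grad /residual_grad /policy_grad -big_split.
by apply: eq_bigr => a _ /=; ring.
Qed.

Lemma opfv_term_time_mean c al x :
  \int[lebesgue_measure]_(t in `[0, T]) (pt t * \sum_(a : A) pi0 x t a
      * \int[kappa x t a]_(r in setT) (c + al * opfv_term (x, t, a, r)))
  = c + al * policy_grad x.
Proof.
transitivity (\int[lebesgue_measure]_(t in `[0, T])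
  ((c + al * regression_grad x) * pt t + al / p * residual_grad x * (pt t * Iphi phi t t'))).
  apply: eq_Rintegral => t; rewrite inE /= in_itv /= => tT.
  by rewrite opfv_term_action_mean //; ring.
rewrite RintegralD //; last 2 first.
- exact: integrableZl_EFin pt_integrable.
- exact: integrableZl_EFin pt_Iphi_integrable.
rewrite !RintegralZl // ?pt_integrable ?pt_Iphi_integrable //.
rewrite Rintegral_pt -regression_residual_grad.
have -> : \int[lebesgue_measure]_(t in `[0, T]) (pt t * Iphi phi t t') = p by [].
by field.
Qed.

Lemma E_rec_opfv_term_affine c al :
  E_rec px pt T pi0 kappa (fun z => c + al * opfv_term z)
  = c + al * \int[px]_(x in setT) policy_grad x.
Proof.
rewrite /E_rec; under eq_Rintegral do rewrite opfv_term_time_mean.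
rewrite RintegralD //; last 2 first.
- exact: finite_measure_integrable_cst.
- exact: integrableZl_EFin policy_grad_int.
by rewrite probability_Rintegral_cst RintegralZl.
Qed.

End opfv_unbiased.

Theorem propositionF3
  (R : realType) (d : measure_display) (X : measurableType d) (A : finType)
  (L : eqType) (k : nat)
  (* context marginal p(x) on [0,T]-period, and context law p(x|t') at t' *)
  (px pxt' : probability X R)
  (Hstat : pxt' = px)
  (T t' rmax : R) (HT : 0 <= T) (Ht' : T < t') (Hrmax : 0 <= rmax)
  (* time density p(t) on [0,T] (stationarity: p(x,t) = p(x) p(t)) *)
  (pt : R -> R)
  (Hpt_meas : measurable_fun `[0, T] pt)
  (Hpt_ge0 : forall t, 0 <= t <= T -> 0 <= pt t)
  (Hpt1 : (\int[@lebesgue_measure R]_(t in `[0%R, T]%classic) (pt t)%:E)%E = 1%E)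
  (* logging policy *)
  (pi0 : X -> R -> A -> R)
  (Hpi0_pos : forall x t a, 0 <= t <= T -> 0 < pi0 x t a)
  (Hpi0_sum : forall x t, 0 <= t <= T -> \sum_(a : A) pi0 x t a = 1)
  (* reward distributions, rewards in [0, rmax] *)
  (kappa : X -> R -> A -> probability R R)
  (Hkappa : forall x t a, kappa x t a `[0, rmax]%classic = 1%E)
  (* time feature function *)
  (phi : R -> L)
  (Hphi_meas : measurable (phi @^-1` [set phi t']))
  (Hpphi : 0 < p_phi pt T phi t')
  (* regressor *)
  (fhat : X -> R -> A -> R)
  (* parametrized policy pi_zeta, differentiable in zeta *)
  (pi : 'rV[R]_k -> X -> R -> A -> R)
  (Hpi_ge0 : forall z x t a, 0 <= pi z x t a)
  (Hpi_sum : forall z x t, \sum_(a : A) pi z x t a = 1)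
  (Hpi_diff : forall x t a z, differentiable (fun z' : 'rV[R]_k => pi z' x t a) z)
  (zeta : 'rV[R]_k)
  (* the true policy gradient exists (integrability) *)
  (Hint : forall j : 'I_k, px.-integrable setT
     (fun x => (\sum_(a : A) pi zeta x t' a * qfun kappa x t' a
                  * score pi zeta x t' a 0 j)%:E))
  (* Delta_q = Delta_fhat where I_phi(t,t') = 1 *)
  (Hdelta : forall x a t, 0 <= t <= T -> Iphi phi t t' = 1 ->
     qfun kappa x t a - qfun kappa x t' a = fhat x t a - fhat x t' a)
  (n : nat) (Hn : (0 < n)%N) :
  E_data px pt T pi0 kappa n (opfv_grad pt T phi pi0 fhat pi zeta t')
  = true_grad pxt' kappa pi zeta t'.
Proof.
subst pxt'; apply/rowP => j; rewrite !mxE.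
apply: (E_data_R_mean (E_rec_opfv_term_affine Hpt_meas Hpt_ge0 Hpt1 Hpi0_pos
  Hpi0_sum Hkappa Hphi_meas Hpphi (Hint j) Hdelta) Hn).
exact: opfv_grad_coordE.
Qed.
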